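(* Let $U\subseteq V$, let $H=(U,E(U))$ be the induced subgraph with inherited edge weights, and let $f\in\ell^2(V,w)$ be nonnegative with $f(v)=0$ for all $v\notin U$ and $\sum_{v\in U}w_H(v)f(v)^2>0$. Suppose that for every $t>0$, $$w\big(E(V_f(t),V\setminus U)\big)\le w\big(E(V_f(t),U\setminus V_f(t))\big).$$ Then $\sqrt{8\,\mathcal R_H(f)}\ge\mathcal R_G(f)$.
   Context: $G=(V,E,w)$ finite undirected, positive edge weights, $w(v)=\sum_{u\sim v}w(u,v)\ge1$. $E(U)$ is the set of edges with both endpoints in $U$; $w_H(v)=\sum_{u\in U,\{u,v\}\in E}w(u,v)$ for $v\in U$. For disjoint $S,T$, $w(E(S,T))$ is the total weight of edges with one endpoint in $S$ and the other in $T$. $V_f(t)=\{v:f(v)\ge t\}$. $\mathcal R_G(f)=\sum_{\{u,v\}\in E}w(u,v)(f(u)-f(v))^2/\sum_{v\in V}w(v)f(v)^2$ and $\mathcal R_H(f)=\sum_{\{u,v\}\in E(U)}w(u,v)(f(u)-f(v))^2/\sum_{v\in U}w_H(v)f(v)^2$. *)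

From HB Require Import structures.
From mathcomp Require Import all_boot all_order all_algebra.
Set Implicit Arguments. Unset Strict Implicit. Unset Printing Implicit Defensive.
Import Order.TTheory GRing.Theory Num.Theory.
Local Open Scope ring_scope.

Section Graph.
Variables (R : rcfType) (V : finType) (e : rel V) (wt : V -> V -> R).

Definition weighted_graph : Prop :=
  [/\ (forall u v, e u v = e v u), (forall v, ~~ e v v),
      (forall u v, wt u v = wt v u) & (forall u v, e u v -> 0 < wt u v)].

Definition wdeg (v : V) : R := \sum_(u | e u v) wt u v.

Definition wdegH (U : {set V}) (v : V) : R := \sum_(u in U | e u v) wt u v.

(* w(E(S,T)) for disjoint S, T: each edge counted once (one endpoint in S, other in T) *)
Definition wcut (S T : {set V}) : R :=
  \sum_(u in S) \sum_(v in T | e u v) wt u v.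

Definition superlevel (f : V -> R) (t : R) : {set V} := [set v | t <= f v].

(* sum over unordered edges {u,v} in E = half the sum over ordered adjacent pairs *)
Definition energyG (f : V -> R) : R :=
  (\sum_u \sum_(v | e u v) wt u v * (f u - f v) ^+ 2) / 2%:R.

Definition energyH (U : {set V}) (f : V -> R) : R :=
  (\sum_(u in U) \sum_(v in U | e u v) wt u v * (f u - f v) ^+ 2) / 2%:R.

Definition RayleighG (f : V -> R) : R :=
  energyG f / \sum_v wdeg v * f v ^+ 2.

Definition RayleighH (U : {set V}) (f : V -> R) : R :=
  energyH U f / \sum_(v in U) wdegH U v * f v ^+ 2.

End Graph.

From HB Require Import structures.
From mathcomp Require Import all_boot all_order all_algebra.
From mathcomp Require Import ring lra.
Set Implicit Arguments. Unset Strict Implicit. Unset Printing Implicit Defensive.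
Import Order.TTheory GRing.Theory Num.Theory.
Local Open Scope ring_scope.

(* All quantities are written as sums  edge_sum F = sum_(u,v) w(u,v) F(u,v)
   over ordered adjacent pairs; this sum is linear, monotone, symmetric under
   swapping u and v, and satisfies Cauchy-Schwarz.  With
   a(u,v) = f u - f v and b(u,v) = f u + f v on the edges of H going down
   (u, v in U, f v < f u), and zero elsewhere, we show
   - edge_sum a^2 = E_H (the energy of f on H) and edge_sum b^2 <= 2 D_H;
   - E_G = E_H + B, where B is the energy carried by the edges leaving U;
   - B <= edge_sum (a b): this is the co-area argument.  Writing f(u)^2 as a
     telescoping "layer-cake" sum over the sorted values of f, both B and
     edge_sum (a b) become sums over the levels t of cuts of V_f(t), and the
     hypothesis compares these cuts level by level.
   Cauchy-Schwarz then gives B^2, E_H^2 <= 2 E_H D_H, hence E_G^2 <= 8 E_H D_H,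
   and the Rayleigh quotients are compared using D_H <= D_G. *)

(* The layer-cake decomposition along an increasing chain c < s_1 < ... < s_k:
   phi x - phi c is the sum of the increments of phi over the layers below x. *)
Section LayerCake.
Variables (R : realDomainType) (phi : R -> R).

Definition layer_sum (c : R) (s : seq R) (x : R) : R :=
  \sum_(p <- zip (c :: s) s) (phi p.2 - phi p.1) * (if p.2 <= x then 1 else 0).

Lemma layer_sum_below c s x : path <%R c s -> x <= c -> layer_sum c s x = 0.
Proof.
elim: s c => [|a s IH] c /=; first by rewrite /layer_sum big_nil.
move=> /andP[ca s_path] xc; rewrite /layer_sum big_cons /=.
have -> : (a <= x) = false by apply/negbTE; rewrite -ltNge (le_lt_trans xc ca).
by rewrite mulr0 add0r; apply: IH => //; exact: le_trans xc (ltW ca).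
Qed.

Lemma layer_cake c s x :
  path <%R c s -> x \in c :: s -> layer_sum c s x = phi x - phi c.
Proof.
elim: s c => [|a s IH] c /=.
  by rewrite inE => _ /eqP ->; rewrite /layer_sum big_nil subrr.
move=> /andP[ca s_path]; rewrite inE => /orP[/eqP ->|x_in].
  by rewrite layer_sum_below ?subrr //= ca s_path.
have ax : a <= x.
  move: x_in; rewrite inE => /orP[/eqP -> // | x_s].
  exact: ltW (allP (order_path_min lt_trans s_path) x x_s).
rewrite /layer_sum big_cons /= ax mulr1.
by have := IH a s_path x_in; rewrite /layer_sum => ->; ring.
Qed.

Lemma layer_bounds c s : path <%R c s ->
  all (fun p : R * R => (c <= p.1) && (p.1 < p.2)) (zip (c :: s) s).
Proof.
elim: s c => [|a s IH] c //= /andP[ca s_path].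
rewrite lexx ca /=; apply/allP => p /(allP (IH a s_path)) /andP[ap p12].
by rewrite p12 andbT (le_trans (ltW ca)).
Qed.

End LayerCake.

(* A quadratic x |-> A x^2 - 2 C x + B (A >= 0) that is nonnegative
   everywhere has nonpositive discriminant; this yields Cauchy-Schwarz. *)
Lemma discriminant_le0 (R : realFieldType) (A B C : R) : 0 <= A ->
  (forall x, 0 <= x ^+ 2 * A - 2%:R * x * C + B) -> C ^+ 2 <= A * B.
Proof.
move=> A_ge0 q_ge0; have [A_gt0|A_le0] := ltP 0 A.
  have := q_ge0 (C / A).
  have -> : (C / A) ^+ 2 * A - 2%:R * (C / A) * C + B = (A * B - C ^+ 2) / A.
    by field; rewrite gt_eqF.
  by rewrite pmulr_lge0 ?invr_gt0 // subr_ge0.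
have A0 : A = 0 by apply/eqP; rewrite eq_le A_le0 A_ge0.
rewrite A0 in q_ge0 *.
have [-> | C_neq0] := eqVneq C 0; first by rewrite expr0n mul0r.
have := q_ge0 ((B + 1) / (2%:R * C)).
have -> : ((B + 1) / (2%:R * C)) ^+ 2 * 0 - 2%:R * ((B + 1) / (2%:R * C)) * C + B
          = -1 by field; rewrite C_neq0.
lra.
Qed.

(* (x + y)^2 <= 2 x^2 + 2 y^2. *)
Lemma sqr_add_le (R : realFieldType) (x y z : R) :
  x ^+ 2 <= z -> y ^+ 2 <= z -> (x + y) ^+ 2 <= 4%:R * z.
Proof. by move=> xz yz; have := sqr_ge0 (x - y); nra. Qed.

Lemma ratio_le_sqrt (R : rcfType) (c x y d D : R) :
  0 < d -> d <= D -> 0 <= x -> x ^+ 2 <= c * y * d ->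
  x / D <= Num.sqrt (c * (y / d)).
Proof.
move=> d_gt0 dD x_ge0 x2_le.
have D_gt0 : 0 < D := lt_le_trans d_gt0 dD.
have xd_ge0 : 0 <= x / d by rewrite divr_ge0 // ltW.
apply: (@le_trans _ _ (x / d)).
  by rewrite ler_wpM2l // lef_pV2 ?posrE.
rewrite -(ger0_norm xd_ge0) -sqrtr_sqr ler_wsqrtr // expr_div_n.
rewrite ler_pdivrMr ?exprn_gt0 //.
have -> : c * (y / d) * d ^+ 2 = c * y * d by field; rewrite gt_eqF.
exact: x2_le.
Qed.

Section EdgeSums.
Variables (R : rcfType) (V : finType) (e : rel V) (wt : V -> V -> R).
Hypotheses (e_sym : forall u v, e u v = e v u)
  (wt_sym : forall u v, wt u v = wt v u)
  (wt_pos : forall u v, e u v -> 0 < wt u v).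

Definition adj_wt (u v : V) : R := if e u v then wt u v else 0.

Definition edge_sum (F : V -> V -> R) : R :=
  \sum_u \sum_v adj_wt u v * F u v.

Lemma adj_wt_ge0 u v : 0 <= adj_wt u v.
Proof. by rewrite /adj_wt; case: ifP => // /wt_pos /ltW. Qed.

Lemma adj_wt_sym u v : adj_wt u v = adj_wt v u.
Proof. by rewrite /adj_wt e_sym wt_sym. Qed.

Lemma edge_sum_ext F G : (forall u v, F u v = G u v) -> edge_sum F = edge_sum G.
Proof.
by move=> FG; apply: eq_bigr => u _; apply: eq_bigr => v _; rewrite FG.
Qed.

Lemma edge_sum_swap F : edge_sum F = edge_sum (fun u v => F v u).
Proof.
rewrite /edge_sum exchange_big; apply: eq_bigr => u _; apply: eq_bigr => v _.
by rewrite adj_wt_sym.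
Qed.

Lemma edge_sumD F G :
  edge_sum (fun u v => F u v + G u v) = edge_sum F + edge_sum G.
Proof.
rewrite /edge_sum -big_split; apply: eq_bigr => u _; rewrite -big_split.
by apply: eq_bigr => v _; rewrite mulrDr.
Qed.

Lemma edge_sumZ c F : edge_sum (fun u v => c * F u v) = c * edge_sum F.
Proof.
rewrite /edge_sum big_distrr; apply: eq_bigr => u _; rewrite big_distrr.
by apply: eq_bigr => v _; rewrite mulrCA.
Qed.

Lemma edge_sum_le F G : (forall u v, F u v <= G u v) -> edge_sum F <= edge_sum G.
Proof.
move=> FG; apply: ler_sum => u _; apply: ler_sum => v _.
by apply: ler_wpM2l; [exact: adj_wt_ge0 | exact: FG].
Qed.

Lemma edge_sum_ge0 F : (forall u v, 0 <= F u v) -> 0 <= edge_sum F.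
Proof.
move=> F_ge0; apply: sumr_ge0 => u _; apply: sumr_ge0 => v _.
exact: mulr_ge0 (adj_wt_ge0 u v) (F_ge0 u v).
Qed.

Lemma edge_sum_symmetrize F :
  edge_sum F + edge_sum F = edge_sum (fun u v => F u v + F v u).
Proof. by rewrite edge_sumD -edge_sum_swap. Qed.

Lemma edge_sum_seq (I : Type) (s : seq I) (c : I -> R) (F : I -> V -> V -> R) :
  \sum_(i <- s) c i * edge_sum (F i) =
  edge_sum (fun u v => \sum_(i <- s) c i * F i u v).
Proof.
elim: s => [|i s IH].
  rewrite big_nil /edge_sum; symmetry.
  by apply: big1 => u _; apply: big1 => v _; rewrite big_nil mulr0.
rewrite big_cons IH -edge_sumZ -edge_sumD.
by apply: edge_sum_ext => u v; rewrite big_cons.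
Qed.

Lemma edge_sum_CS F G :
  edge_sum (fun u v => F u v * G u v) ^+ 2 <=
  edge_sum (fun u v => F u v ^+ 2) * edge_sum (fun u v => G u v ^+ 2).
Proof.
apply: discriminant_le0 => [|x]; first by apply: edge_sum_ge0 => u v; exact: sqr_ge0.
have -> : x ^+ 2 * edge_sum (fun u v => F u v ^+ 2) -
          2%:R * x * edge_sum (fun u v => F u v * G u v) +
          edge_sum (fun u v => G u v ^+ 2) =
          edge_sum (fun u v => (x * F u v - G u v) ^+ 2).
  rewrite -mulNr -!edge_sumZ -!edge_sumD; apply: edge_sum_ext => u v; ring.
by apply: edge_sum_ge0 => u v; exact: sqr_ge0.
Qed.

Lemma adj_row (P : pred V) (G : V -> R) u :
  \sum_(v | P v && e u v) wt u v * G v =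
  \sum_v adj_wt u v * (if P v then G v else 0).
Proof.
rewrite big_mkcond; apply: eq_bigr => v _; rewrite /adj_wt.
by case: (P v); case: (e u v); rewrite /= ?mulr0 ?mul0r.
Qed.

Lemma wcut_edge_sum (S X : {set V}) :
  wcut e wt S X = edge_sum (fun u v => if (u \in S) && (v \in X) then 1 else 0).
Proof.
rewrite /wcut /edge_sum big_mkcond; apply: eq_bigr => u _.
case: (u \in S) => /=; last by symmetry; apply: big1 => v _; rewrite mulr0.
by rewrite -adj_row; apply: eq_bigr => v _; rewrite mulr1.
Qed.

Lemma energyG_edge_sum (f : V -> R) :
  energyG e wt f = edge_sum (fun u v => (f u - f v) ^+ 2) / 2%:R.
Proof.
rewrite /energyG /edge_sum; congr (_ / _); apply: eq_bigr => u _.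
exact: (adj_row predT (fun v => (f u - f v) ^+ 2)).
Qed.

Lemma energyH_edge_sum (U : {set V}) (f : V -> R) : energyH e wt U f =
  edge_sum (fun u v => if (u \in U) && (v \in U) then (f u - f v) ^+ 2 else 0)
  / 2%:R.
Proof.
rewrite /energyH /edge_sum; congr (_ / _); rewrite big_mkcond.
apply: eq_bigr => u _; case: (u \in U) => /=.
  exact: (adj_row (mem U) (fun v => (f u - f v) ^+ 2)).
by symmetry; apply: big1 => v _; rewrite mulr0.
Qed.

Lemma degG_edge_sum (f : V -> R) :
  \sum_v wdeg e wt v * f v ^+ 2 = edge_sum (fun u v => f v ^+ 2).
Proof.
rewrite /edge_sum exchange_big; apply: eq_bigr => v _; rewrite -mulr_suml.
congr (_ * _); rewrite /wdeg big_mkcond; apply: eq_bigr => u _.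
by rewrite /adj_wt; case: (e u v).
Qed.

Lemma degH_edge_sum (U : {set V}) (f : V -> R) :
  \sum_(v in U) wdegH e wt U v * f v ^+ 2 =
  edge_sum (fun u v => if (u \in U) && (v \in U) then f v ^+ 2 else 0).
Proof.
rewrite /edge_sum exchange_big big_mkcond; apply: eq_bigr => v _.
case: (v \in U) => /=; last by symmetry; apply: big1 => u _; rewrite andbF mulr0.
rewrite /wdegH big_mkcond mulr_suml; apply: eq_bigr => u _; rewrite /adj_wt.
by case: (u \in U); case: (e u v); rewrite /= ?mulr0 ?mul0r.
Qed.

Lemma energyG_ge0 (f : V -> R) : 0 <= energyG e wt f.
Proof.
rewrite energyG_edge_sum divr_ge0 //.
by apply: edge_sum_ge0 => u v; exact: sqr_ge0.
Qed.

Lemma degH_le_degG (U : {set V}) (f : V -> R) :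
  \sum_(v in U) wdegH e wt U v * f v ^+ 2 <= \sum_v wdeg e wt v * f v ^+ 2.
Proof.
rewrite degH_edge_sum degG_edge_sum; apply: edge_sum_le => u v.
by case: ifP => // _; exact: sqr_ge0.
Qed.

Section Estimates.
Variables (U : {set V}) (f : V -> R).
Hypotheses (f_ge0 : forall v, 0 <= f v) (f_out0 : forall v, v \notin U -> f v = 0).

Definition descends (u v : V) : bool := [&& u \in U, v \in U & f v < f u].

Definition down_diff (u v : V) : R := if descends u v then f u - f v else 0.
Definition down_sum (u v : V) : R := if descends u v then f u + f v else 0.

(* Energy carried by the edges leaving U, where (f u - f v)^2 = f u^2. *)
Definition boundary_energy : R :=
  edge_sum (fun u v => if v \in U then 0 else f u ^+ 2).

(* Every edge of H is counted once, in its downhill direction: the edge sum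
   of down_diff^2 is the energy of f on H. *)
Lemma energyH_down_diff :
  edge_sum (fun u v => down_diff u v ^+ 2) = energyH e wt U f.
Proof.
have sym : edge_sum (fun u v => down_diff u v ^+ 2 + down_diff v u ^+ 2) =
    edge_sum (fun u v => if (u \in U) && (v \in U) then (f u - f v) ^+ 2 else 0).
  apply: edge_sum_ext => u v; rewrite /down_diff /descends.
  case: (u \in U); case: (v \in U) => /=; try ring.
  by case: (ltgtP (f u) (f v)) => [_|_|->] /=; ring.
rewrite energyH_edge_sum -sym -edge_sum_symmetrize; lra.
Qed.

(* From (f u + f v)^2 <= 2 (f u^2 + f v^2): the edge sum of down_sum^2 is at
   most twice the H-degree of f. *)
Lemma down_sum_bound : edge_sum (fun u v => down_sum u v ^+ 2) <=
  2%:R * \sum_(v in U) wdegH e wt U v * f v ^+ 2.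
Proof.
pose G u v := if (u \in U) && (v \in U) then f v ^+ 2 else 0.
have sym : edge_sum (fun u v => down_sum u v ^+ 2 + down_sum v u ^+ 2) <=
    edge_sum (fun u v => 2%:R * (G u v + G v u)).
  apply: edge_sum_le => u v; rewrite /down_sum /descends /G.
  case: (u \in U); case: (v \in U) => /=; try lra.
  have := sqr_ge0 (f u - f v).
  by case: (ltgtP (f u) (f v)) => [_|_|->] /=; nra.
move: sym; rewrite degH_edge_sum -/G edge_sumZ -!edge_sum_symmetrize; lra.
Qed.

Lemma down_diff_le_sum : edge_sum (fun u v => down_diff u v ^+ 2) <=
  edge_sum (fun u v => down_sum u v ^+ 2).
Proof.
apply: edge_sum_le => u v; rewrite /down_diff /down_sum.
by case: ifP => // _; have := f_ge0 u; have := f_ge0 v; nra.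
Qed.

Lemma energyG_split : energyG e wt f = energyH e wt U f + boundary_energy.
Proof.
rewrite energyG_edge_sum energyH_edge_sum /boundary_energy.
rewrite (edge_sum_ext (G := fun u v =>
   ((if (u \in U) && (v \in U) then (f u - f v) ^+ 2 else 0) +
    (if v \in U then 0 else f u ^+ 2)) + (if u \in U then 0 else f v ^+ 2))).
  by rewrite !edge_sumD [X in _ + X]edge_sum_swap; lra.
move=> u v; have [uU|/f_out0 ->] := boolP (u \in U);
  have [vU|/f_out0 ->] := boolP (v \in U) => /=; ring.
Qed.

(* The positive values of f in increasing order, and the layers
   (0, t_1], (t_1, t_2], ... they cut out. *)
Definition levels : seq R := sort <=%R (undup [seq f v | v <- enum V & 0 < f v]).
Definition slabs : seq (R * R) := zip (0 :: levels) levels.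

Lemma levels_path : path <%R 0 levels.
Proof.
rewrite path_sortedE; last exact: lt_trans.
apply/andP; split; last by rewrite sort_lt_sorted undup_uniq.
apply/allP => x; rewrite mem_sort mem_undup => /mapP[v].
by rewrite mem_filter => /andP[v_pos _] ->.
Qed.

Lemma f_in_levels v : f v \in 0 :: levels.
Proof.
rewrite inE; have [// | fv_neq0] := eqVneq (f v) 0.
rewrite mem_sort mem_undup; apply/orP; right; apply: map_f.
by rewrite mem_filter mem_enum andbT lt_neqAle eq_sym fv_neq0 f_ge0.
Qed.

Lemma slab_bounds p : p \in slabs -> 0 <= p.1 < p.2.
Proof. exact: (allP (layer_bounds levels_path)). Qed.

Lemma layer_sqr v : layer_sum (fun t => t ^+ 2) 0 levels (f v) = f v ^+ 2.
Proof. by rewrite layer_cake ?f_in_levels ?levels_path // expr0n subr0. Qed.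

Lemma boundary_energy_slabs : boundary_energy =
  \sum_(p <- slabs) (p.2 ^+ 2 - p.1 ^+ 2) * wcut e wt (superlevel f p.2) (~: U).
Proof.
under eq_bigr do rewrite wcut_edge_sum.
rewrite edge_sum_seq; apply: edge_sum_ext => u v; rewrite in_setC.
case: (v \in U) => /=; first by symmetry; apply: big1 => p _; rewrite andbF mulr0.
by rewrite -layer_sqr; apply: eq_bigr => p _; rewrite /superlevel inE andbT.
Qed.

Lemma down_product_slabs :
  \sum_(p <- slabs) (p.2 ^+ 2 - p.1 ^+ 2) *
     wcut e wt (superlevel f p.2) (U :\: superlevel f p.2) =
  edge_sum (fun u v => down_diff u v * down_sum u v).
Proof.
under eq_bigr do rewrite wcut_edge_sum.
rewrite edge_sum_seq; apply: edge_sum_ext => u v.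
under eq_bigr do rewrite in_setD /superlevel !inE.
rewrite /down_diff /down_sum /descends.
have [vU|vU] := boolP (v \in U); last first.
  by rewrite andbF mul0r; apply: big1 => p _; rewrite !andbF mulr0.
have [fvu|fuv] := ltP (f v) (f u); last first.
  rewrite !andbF mul0r; apply: big1 => p _; rewrite andbT.
  case: (leP p.2 (f u)) => p2u /=; last by rewrite mulr0.
  by rewrite (le_trans p2u fuv) mulr0.
have uU : u \in U.
  by apply/negPn/negP => /f_out0 fu0; have := f_ge0 v; rewrite fu0 in fvu; lra.
rewrite uU /= (_ : (f u - f v) * (f u + f v) = f u ^+ 2 - f v ^+ 2); last by ring.
rewrite -!layer_sqr /layer_sum -sumrB; apply: eq_bigr => p _.
rewrite -mulrBr andbT; congr (_ * _).
by case: (leP p.2 (f u)); case: (leP p.2 (f v)) => /= p2v p2u; lra.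
Qed.

Hypothesis cut_le : forall t, 0 < t ->
  wcut e wt (superlevel f t) (~: U) <=
  wcut e wt (superlevel f t) (U :\: superlevel f t).

Lemma boundary_le_down_product :
  boundary_energy <= edge_sum (fun u v => down_diff u v * down_sum u v).
Proof.
rewrite boundary_energy_slabs -down_product_slabs big_seq [X in _ <= X]big_seq.
apply: ler_sum => p /slab_bounds /andP[p1_ge0 p12].
apply: ler_wpM2l; first by nra.
exact: cut_le (le_lt_trans p1_ge0 p12).
Qed.

(* By Cauchy-Schwarz both E_H^2 and B^2 are at most 2 E_H D_H, so
   E_G^2 = (E_H + B)^2 <= 8 E_H D_H. *)
Lemma energyG_sqr_bound : energyG e wt f ^+ 2 <=
  8%:R * energyH e wt U f * \sum_(v in U) wdegH e wt U v * f v ^+ 2.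
Proof.
set DH := \sum_(v in U) _.
set A2 := edge_sum (fun u v => down_diff u v ^+ 2).
set B2 := edge_sum (fun u v => down_sum u v ^+ 2).
have A2_ge0 : 0 <= A2 by apply: edge_sum_ge0 => u v; exact: sqr_ge0.
have A2B2_le : A2 * B2 <= A2 * (2%:R * DH).
  by apply: ler_wpM2l; last exact: down_sum_bound.
have bnd_ge0 : 0 <= boundary_energy.
  by apply: edge_sum_ge0 => u v; case: ifP => // _; exact: sqr_ge0.
rewrite energyG_split -energyH_down_diff -/A2.
have -> : 8%:R * A2 * DH = 4%:R * (A2 * (2%:R * DH)) by ring.
apply: sqr_add_le; apply: le_trans A2B2_le.
  by rewrite expr2; apply: ler_wpM2l; last exact: down_diff_le_sum.
apply: le_trans (edge_sum_CS _ _); rewrite ler_sqr ?nnegrE //.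
  exact: boundary_le_down_product.
exact: le_trans boundary_le_down_product.
Qed.

End Estimates.
End EdgeSums.

Theorem mainTheorem10 (R : rcfType) (V : finType) (e : rel V) (wt : V -> V -> R)
  (U : {set V}) (f : V -> R) :
  weighted_graph e wt ->
  (forall v, 1 <= wdeg e wt v) ->
  (forall v, 0 <= f v) ->
  (forall v, v \notin U -> f v = 0) ->
  0 < \sum_(v in U) wdegH e wt U v * f v ^+ 2 ->
  (forall t, 0 < t ->
     wcut e wt (superlevel f t) (~: U) <=
     wcut e wt (superlevel f t) (U :\: superlevel f t)) ->
  RayleighG e wt f <= Num.sqrt (8%:R * RayleighH e wt U f).
Proof.
case=> e_sym _ wt_sym wt_pos _ f_ge0 f_out0 degH_gt0 cut_le.
rewrite /RayleighG /RayleighH; apply: ratio_le_sqrt degH_gt0 _ _ _.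
- exact: degH_le_degG.
- exact: energyG_ge0.
- exact (energyG_sqr_bound e_sym wt_sym wt_pos f_ge0 f_out0 cut_le).
Qed.
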